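(* Let $\Lambda$ be a row-finite $k$-graph with no sources and $R$ a commutative ring with $1$. For $(\alpha,\beta)\in\Lambda\times\Lambda$ with $s(\alpha)=s(\beta)$, the following are equivalent: (1) $s_{\alpha\gamma}s_{(\alpha\gamma)^*}=s_{\beta\gamma}s_{(\beta\gamma)^*}$ for all $\gamma\in s(\alpha)\Lambda$; (2) $s_\alpha s_{\beta^*}$ is normal (i.e. $aa^*=a^*a$ for $a=s_\alpha s_{\beta^*}$) and commutes with every element of $\mathcal{D}$; (3) $\alpha\gamma=\beta\gamma$ for all $\gamma\in s(\alpha)\Lambda^\infty$.
   Context: A $k$-graph is a countable category $\Lambda$ (objects $\Lambda^0$, vertices; morphisms, paths; range/source maps $r,s$) with a degree functor $d:\Lambda\to\mathbb{N}^k$ satisfying unique factorization: if $d(\lambda)=m+n$ there are unique $\mu,\nu$ with $s(\mu)=r(\nu)$, $d(\mu)=m$, $d(\nu)=n$, $\lambda=\mu\nu$. $\Lambda^n=d^{-1}(n)$, $v\Lambda=\{\lambda:r(\lambda)=v\}$, $v\Lambda^n=v\Lambda\cap\Lambda^n$. Row-finite with no sources: each $v\Lambda^n$ is finite and nonempty. ${\rm KP}_R(\Lambda)$ is the universal $R$-algebra generated by $p_v$ ($v\in\Lambda^0$) and $s_\lambda,s_{\lambda^*}$ ($d(\lambda)\neq0$) with relations (KP1) $p_v$ mutually orthogonal idempotents; (KP2) $s_\lambda s_\mu=s_{\lambda\mu}$, $s_{\mu^*}s_{\lambda^*}=s_{(\lambda\mu)^*}$, $p_{r(\lambda)}s_\lambda=s_\lambda=s_\lambda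 p_{s(\lambda)}$, $p_{s(\lambda)}s_{\lambda^*}=s_{\lambda^*}=s_{\lambda^*}p_{r(\lambda)}$ when $r(\mu)=s(\lambda)$; (KP3) $s_{\lambda^*}s_\mu=\delta_{\lambda,\mu}p_{s(\lambda)}$ when $d(\lambda)=d(\mu)$; (KP4) $p_v=\sum_{\lambda\in v\Lambda^n}s_\lambda s_{\lambda^*}$ for $n\neq0$. Convention $s_v=s_{v^*}=p_v$. ${\rm KP}_R(\Lambda)$ is spanned by $\{s_\mu s_{\nu^*}: s(\mu)=s(\nu)\}$ and carries the $R$-linear involution $a\mapsto a^*$ with $(s_\alpha s_{\beta^*})^*=s_\beta s_{\alpha^*}$. $\mathcal{D}$ is the $R$-subalgebra generated by $\{s_\mu s_{\mu^*}:\mu\in\Lambda\}$. Let $\Omega_k$ be the $k$-graph with objects $\mathbb{N}^k$, morphisms $\{(p,q): p\le q\}$, $r(p,q)=p$, $s(p,q)=q$, $(p,q)(q,t)=(p,t)$, $d(p,q)=q-p$. An infinite path is a degree-preserving functor $x:\Omega_k\to\Lambda$; $\Lambda^\infty$ is the set of infinite paths, $r(x)=x(0,0)$, and $v\Lambda^\infty=\{x: r(x)=v\}$. For $\alpha\in\Lambda$ and $x\in s(\alpha)\Lambda^\infty$, $\alpha x$ is the unique infinite path with $(\alpha x)(0,n)=\alpha\,x(0,n-d(\alpha))$ for all $n\ge d(\alpha)$. *)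

From HB Require Import structures.
From mathcomp Require Import all_boot all_order all_algebra.
Set Implicit Arguments. Unset Strict Implicit. Unset Printing Implicit Defensive.
Import GRing.Theory.
Local Open Scope ring_scope.

Definition degT (k : nat) := {ffun 'I_k -> nat}.
Definition dzero (k : nat) : degT k := [ffun _ => 0%N].
Definition dadd (k : nat) (m n : degT k) : degT k := [ffun i => (m i + n i)%N].
Definition dsub (k : nat) (m n : degT k) : degT k := [ffun i => (m i - n i)%N].
Definition dle (k : nat) (m n : degT k) : bool := [forall i, (m i <= n i)%N].

(* A countable category (objects Obj, morphisms Mor, both countable types)
   with range rg, source sr, identities idm, composition kcomp (only meaningful
   when sr l = rg m; kcomp l m is "l m") and a degree functor deg into N^k
   satisfying the unique factorisation property. *)
Record kgraph (k : nat) := KGraph {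
  Obj : countType;
  Mor : countType;
  rg : Mor -> Obj;
  sr : Mor -> Obj;
  idm : Obj -> Mor;
  kcomp : Mor -> Mor -> Mor;
  deg : Mor -> degT k;
  rg_idm : forall v, rg (idm v) = v;
  sr_idm : forall v, sr (idm v) = v;
  rg_comp : forall l m, sr l = rg m -> rg (kcomp l m) = rg l;
  sr_comp : forall l m, sr l = rg m -> sr (kcomp l m) = sr m;
  comp_assoc : forall l m n, sr l = rg m -> sr m = rg n ->
      kcomp l (kcomp m n) = kcomp (kcomp l m) n;
  comp_idl : forall l, kcomp (idm (rg l)) l = l;
  comp_idr : forall l, kcomp l (idm (sr l)) = l;
  deg_idm : forall v, deg (idm v) = dzero k;
  deg_comp : forall l m, sr l = rg m -> deg (kcomp l m) = dadd (deg l) (deg m);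
  unique_factorisation : forall l (m n : degT k), deg l = dadd m n ->
      exists! mn : Mor * Mor,
        [/\ sr mn.1 = rg mn.2, deg mn.1 = m, deg mn.2 = n & l = kcomp mn.1 mn.2]
}.

Arguments rg {k L} _ : rename.
Arguments sr {k L} _ : rename.
Arguments idm {k L} _ : rename.
Arguments kcomp {k L} _ _ : rename.
Arguments deg {k L} _ : rename.

Definition row_finite_no_sources (k : nat) (L : kgraph k) : Prop :=
  forall (v : Obj L) (n : degT k),
    exists l : seq (Mor L),
      [/\ uniq l, l != [::] &
          forall lam, (lam \in l) = (rg lam == v) && (deg lam == n)].

(* A degree-preserving functor x : Ω_k -> Λ, given by its values on the
   morphisms (p,q), p <= q, of Ω_k; the object p is sent to rg (x p p). *)
Definition is_infpath (k : nat) (L : kgraph k) (x : degT k -> degT k -> Mor L) : Prop :=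
  [/\ forall p q, dle p q -> rg (x p q) = rg (x p p) /\ sr (x p q) = rg (x q q),
      forall p, x p p = idm (rg (x p p)),
      forall p q t, dle p q -> dle q t -> kcomp (x p q) (x q t) = x p t &
      forall p q, dle p q -> deg (x p q) = dsub q p].

Definition infpath_range (k : nat) (L : kgraph k) (x : degT k -> degT k -> Mor L) : Obj L :=
  rg (x (dzero k) (dzero k)).

Definition infpath_eq (k : nat) (L : kgraph k) (x y : degT k -> degT k -> Mor L) : Prop :=
  forall p q, dle p q -> x p q = y p q.

Definition is_concat (k : nat) (L : kgraph k) (a : Mor L)
    (x y : degT k -> degT k -> Mor L) : Prop :=
  is_infpath y /\
  forall n, dle (deg a) n -> y (dzero k) n = kcomp a (x (dzero k) (dsub n (deg a))).

Record nualg (R : comNzRingType) := NUAlg {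
  nua_car :> lmodType R;
  nua_mul : nua_car -> nua_car -> nua_car;
  nua_mulA : associative nua_mul;
  nua_mulDl : left_distributive nua_mul +%R;
  nua_mulDr : right_distributive nua_mul +%R;
  nua_mulZl : forall (c : R) x y, nua_mul (c *: x) y = c *: nua_mul x y;
  nua_mulZr : forall (c : R) x y, nua_mul x (c *: y) = c *: nua_mul x y
}.
Arguments nua_mul {R A} _ _ : rename.

Definition nua_hom (R : comNzRingType) (A B : nualg R) (f : A -> B) : Prop :=
  [/\ forall x y, f (x + y) = f x + f y,
      forall (c : R) x, f (c *: x) = c *: f x &
      forall x y, f (nua_mul x y) = nua_mul (f x) (f y)].

(* p v = p_v ; s l = s_l ; ss l = s_{l^*}.  Generators are s_l, s_{l^*} for
   d(l) <> 0, with the convention s_v = s_{v^*} = p_v (v identified with idm v,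
   the unique path of degree 0 at v). *)
Definition is_KP_family (k : nat) (L : kgraph k) (R : comNzRingType) (A : nualg R)
    (p : Obj L -> A) (s ss : Mor L -> A) : Prop :=
  [/\
      (forall v, s (idm v) = p v /\ ss (idm v) = p v),
      (forall v w, nua_mul (p v) (p w) = if v == w then p v else 0),
      (forall l m, deg l != dzero k -> deg m != dzero k -> rg m = sr l ->
         nua_mul (s l) (s m) = s (kcomp l m) /\
         nua_mul (ss m) (ss l) = ss (kcomp l m)) /\
      (forall l, deg l != dzero k ->
         [/\ nua_mul (p (rg l)) (s l) = s l, nua_mul (s l) (p (sr l)) = s l,
             nua_mul (p (sr l)) (ss l) = ss l & nua_mul (ss l) (p (rg l)) = ss l]),
      (forall l m, deg l != dzero k -> deg l = deg m ->
         nua_mul (ss l) (s m) = if l == m then p (sr l) else 0) &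
      (forall v (n : degT k), n != dzero k -> forall e : seq (Mor L), uniq e ->
         (forall lam, (lam \in e) = (rg lam == v) && (deg lam == n)) ->
         p v = \sum_(lam <- e) nua_mul (s lam) (ss lam))].

Definition is_KP_algebra (k : nat) (L : kgraph k) (R : comNzRingType) (A : nualg R)
    (p : Obj L -> A) (s ss : Mor L -> A) : Prop :=
  is_KP_family p s ss /\
  forall (B : nualg R) (q : Obj L -> B) (t tt : Mor L -> B), is_KP_family q t tt ->
    (exists f : A -> B, nua_hom f /\
        [/\ forall v, f (p v) = q v, forall l, f (s l) = t l & forall l, f (ss l) = tt l])
    /\
    (forall f g : A -> B, nua_hom f -> nua_hom g ->
        (forall v, f (p v) = q v) -> (forall l, f (s l) = t l) -> (forall l, f (ss l) = tt l) ->
        (forall v, g (p v) = q v) -> (forall l, g (s l) = t l) -> (forall l, g (ss l) = tt l) ->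
        forall x, f x = g x).

Inductive in_diag (k : nat) (L : kgraph k) (R : comNzRingType) (A : nualg R)
    (s ss : Mor L -> A) : A -> Prop :=
  | diag_gen : forall mu, in_diag s ss (nua_mul (s mu) (ss mu))
  | diag_zero : in_diag s ss 0
  | diag_add : forall x y, in_diag s ss x -> in_diag s ss y -> in_diag s ss (x + y)
  | diag_scale : forall (c : R) x, in_diag s ss x -> in_diag s ss (c *: x)
  | diag_mul : forall x y, in_diag s ss x -> in_diag s ss y -> in_diag s ss (nua_mul x y).

From HB Require Import structures.
From mathcomp Require Import all_boot all_order all_algebra.
From mathcomp Require Import zify boolp.
Import GRing.Theory.
Set Implicit Arguments. Unset Strict Implicit. Unset Printing Implicit Defensive.

(* (1) <-> (2): [x := s_a s_b^*] satisfies [x x^* = s_a s_a^*], so normality of [x] says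
   [s_a s_a^* = s_b s_b^*].  Expanding [x] by (KP4) into the terms [s_(a l) s_(b l)^*],
   condition (1) makes every term commute with each diagonal projection [s_mu s_mu^*];
   conversely, commuting with [s_(b g) s_(b g)^*] forces [s_(a g) s_(a g)^* = s_(b g) s_(b g)^*].
   (3) -> (1): a long path [a g l] extends to an infinite path, so by (3) it starts with
   [b g]; expanding [s_(a g) s_(a g)^*] by (KP4) then shows that the projections onto
   [a g] and [b g] absorb each other.
   (1) -> (3): [KP_R(Lambda)] acts on the functions [Lambda^infty -> R], with
   [s_mu s_mu^*] acting as multiplication by the indicator of the paths starting with
   [mu]; through the universal property, (1) says that [a x] starts with [b g] whenever
   it starts with [a g], for every prefix [g] of [x]. *)

Section Degrees.
Variable k : nat.
Implicit Types m n q : degT k.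

Lemma degP m n : (forall i, m i = n i) -> m = n.
Proof. by move=> h; apply/ffunP. Qed.

Lemma adddA m n q : dadd m (dadd n q) = dadd (dadd m n) q.
Proof. by apply: degP => i; rewrite !ffunE addnA. Qed.

Lemma addd0 m : dadd m (dzero k) = m.
Proof. by apply: degP => i; rewrite !ffunE addn0. Qed.

Lemma adddI m : injective (dadd m).
Proof. move=> n q /ffunP h; apply: degP => i; move: (h i); rewrite !ffunE; lia. Qed.

Lemma subdKC m n : dle m n -> dadd m (dsub n m) = n.
Proof. by move=> /forallP h; apply: degP => i; rewrite !ffunE subnKC. Qed.

Lemma addKd m n : dsub (dadd m n) m = n.
Proof. by apply: degP => i; rewrite !ffunE addKn. Qed.

Lemma subd0 m : dsub m (dzero k) = m.
Proof. by apply: degP => i; rewrite !ffunE subn0. Qed.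

Lemma subdd m : dsub m m = dzero k.
Proof. by apply: degP => i; rewrite !ffunE subnn. Qed.

Lemma dleP m n : reflect (forall i, m i <= n i) (dle m n).
Proof. exact: forallP. Qed.

Lemma dlenn m : dle m m.
Proof. exact/dleP. Qed.

Lemma dle_trans n m q : dle m n -> dle n q -> dle m q.
Proof. by move=> /dleP h1 /dleP h2; apply/dleP => i; apply: leq_trans (h1 i) (h2 i). Qed.

Lemma dle0d m : dle (dzero k) m.
Proof. by apply/dleP => i; rewrite ffunE. Qed.

Lemma dle_addr m n : dle m (dadd m n).
Proof. by apply/dleP => i; rewrite ffunE leq_addr. Qed.

Lemma dle_addl m n : dle n (dadd m n).
Proof. by apply/dleP => i; rewrite ffunE leq_addl. Qed.

Lemma dle_add2l m n q : dle n q -> dle (dadd m n) (dadd m q).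
Proof. by move=> /dleP h; apply/dleP => i; rewrite !ffunE leq_add2l. Qed.

End Degrees.

Lemma degT0 (m : degT 0) : m = dzero 0.
Proof. by apply: degP => -[]. Qed.

Section Factorisation.
Variables (k : nat) (L : kgraph k).
Implicit Types (a b l : Mor L) (m n : degT k).

Lemma factor_uniq a b a' b' : sr a = rg b -> sr a' = rg b' -> deg a = deg a' ->
  kcomp a b = kcomp a' b' -> a = a' /\ b = b'.
Proof.
move=> hab hab' hd he.
have hdb : deg b = deg b'.
  by apply: (@adddI _ (deg a)); rewrite -deg_comp // he deg_comp // hd.
have [[x y] [_ uniq_xy]] := unique_factorisation (deg_comp hab).
have e1 := uniq_xy (a, b) (And4 hab erefl erefl erefl).
have e2 := uniq_xy (a', b') (And4 hab' (esym hd) (esym hdb) he).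
by case: e1 e2 => -> -> [-> ->].
Qed.

Definition factor_spec l m (ab : Mor L * Mor L) : bool :=
  [&& sr ab.1 == rg ab.2, deg ab.1 == m, deg ab.2 == dsub (deg l) m & l == kcomp ab.1 ab.2].

(* The implication makes [factor] total: junk value when [m] exceeds [deg l]. *)
Lemma factor_exists l m : exists ab, dle m (deg l) ==> factor_spec l m ab.
Proof.
have [hm|_] := boolP (dle m (deg l)); last by exists (l, l).
have [ab [[h1 h2 h3 h4] _]] := unique_factorisation (esym (subdKC hm)).
by exists ab; rewrite /factor_spec h1 h2 h3 -h4 !eqxx.
Qed.

Definition factor l m : Mor L * Mor L := xchoose (factor_exists l m).
Definition pre l m := (factor l m).1.
Definition suf l m := (factor l m).2.

Lemma factorP l m : dle m (deg l) ->
  [/\ sr (pre l m) = rg (suf l m), deg (pre l m) = m, deg (suf l m) = dsub (deg l) m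
    & l = kcomp (pre l m) (suf l m)].
Proof.
move=> hm; have /implyP/(_ hm) := xchooseP (factor_exists l m).
by case/and4P=> /eqP ? /eqP ? /eqP ? /eqP.
Qed.

Section Prefix.
Variables (l : Mor L) (m : degT k).
Hypothesis hm : dle m (deg l).

Lemma sr_pre : sr (pre l m) = rg (suf l m). Proof. by case: (factorP hm). Qed.
Lemma deg_pre : deg (pre l m) = m. Proof. by case: (factorP hm). Qed.
Lemma deg_suf : deg (suf l m) = dsub (deg l) m. Proof. by case: (factorP hm). Qed.
Lemma pre_suf : kcomp (pre l m) (suf l m) = l. Proof. by case: (factorP hm). Qed.
Lemma rg_pre : rg (pre l m) = rg l. Proof. by rewrite -{2}pre_suf rg_comp // sr_pre. Qed.
Lemma sr_suf : sr (suf l m) = sr l. Proof. by rewrite -{2}pre_suf sr_comp // sr_pre. Qed.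

End Prefix.

Lemma pre_comp a b : sr a = rg b -> pre (kcomp a b) (deg a) = a.
Proof.
move=> hab; have hle : dle (deg a) (deg (kcomp a b)) by rewrite deg_comp ?dle_addr.
by have [] := factor_uniq (sr_pre hle) hab (deg_pre hle) (pre_suf hle).
Qed.

Lemma suf_comp a b : sr a = rg b -> suf (kcomp a b) (deg a) = b.
Proof.
move=> hab; have hle : dle (deg a) (deg (kcomp a b)) by rewrite deg_comp ?dle_addr.
by have [] := factor_uniq (sr_pre hle) hab (deg_pre hle) (pre_suf hle).
Qed.

Lemma deg0_idm l : deg l = dzero k -> l = idm (rg l).
Proof.
move=> hl; have e : kcomp l (idm (sr l)) = kcomp (idm (rg l)) l by rewrite comp_idr comp_idl.
by have [] := factor_uniq _ _ _ e; rewrite ?rg_idm ?sr_idm ?deg_idm.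
Qed.

Lemma pre_deg l : pre l (deg l) = l.
Proof. by have := @pre_comp l (idm (sr l)); rewrite comp_idr rg_idm; apply. Qed.

Lemma suf0 l : suf l (dzero k) = l.
Proof.
by have := @suf_comp (idm (rg l)) l; rewrite sr_idm comp_idl deg_idm; apply.
Qed.

Lemma pre0 l : pre l (dzero k) = idm (rg l).
Proof. by have h := dle0d (deg l); rewrite (deg0_idm (deg_pre h)) rg_pre. Qed.

Lemma pre_comp_le a b m : sr a = rg b -> dle m (deg a) -> pre (kcomp a b) m = pre a m.
Proof.
move=> hab hm; have hsb : sr (suf a m) = rg b by rewrite sr_suf.
rewrite -{1}(pre_suf hm) -comp_assoc ?sr_pre //.
by have := @pre_comp (pre a m) (kcomp (suf a m) b); rewrite deg_pre // rg_comp ?sr_pre //; apply.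
Qed.

Lemma pre_pre l n m : dle n m -> dle m (deg l) -> pre (pre l m) n = pre l n.
Proof.
by move=> hnm hm; rewrite -{2}(pre_suf hm) pre_comp_le ?sr_pre ?deg_pre.
Qed.

Lemma pre_comp_add a b n : sr a = rg b -> dle n (deg b) ->
  pre (kcomp a b) (dadd (deg a) n) = kcomp a (pre b n).
Proof.
move=> hab hn; have h := @pre_comp (kcomp a (pre b n)) (suf b n).
rewrite -comp_assoc ?rg_pre ?sr_pre // pre_suf // deg_comp ?rg_pre // deg_pre // in h.
by apply: h; rewrite sr_comp ?sr_pre ?rg_pre.
Qed.

Lemma suf_suf l m n : dle (dadd m n) (deg l) -> suf (suf l m) n = suf l (dadd m n).
Proof.
move=> h; have hm : dle m (deg l) := dle_trans (dle_addr m n) h.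
have hn : dle n (deg (suf l m)).
  by rewrite deg_suf //; apply/dleP => i; move/dleP: h => /(_ i); rewrite !ffunE; lia.
have hc : sr (kcomp (pre l m) (pre (suf l m) n)) = rg (suf (suf l m) n)
  by rewrite sr_comp ?sr_pre // rg_pre // -sr_pre.
have el : l = kcomp (kcomp (pre l m) (pre (suf l m) n)) (suf (suf l m) n).
  by rewrite -comp_assoc ?pre_suf ?rg_pre ?sr_pre.
have := suf_comp hc; rewrite -el deg_comp ?rg_pre ?sr_pre // !deg_pre //; apply.
Qed.

End Factorisation.

(* An infinite path [x] is encoded by its prefixes [n |-> x(0, n)]. *)
Section PrefixFamilies.
Variables (k : nat) (L : kgraph k).
Implicit Types (l : Mor L) (m n : degT k).

Definition prefix_family (c : degT k -> Mor L) : Prop :=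
  (forall n, deg (c n) = n) /\ (forall n m, dle n m -> pre (c m) n = c n).

Definition pf_range (c : degT k -> Mor L) : Obj L := rg (c (dzero k)).

Definition pf_shift m (c : degT k -> Mor L) : degT k -> Mor L :=
  fun n => suf (c (dadd m n)) m.

Definition pf_cons l (c : degT k -> Mor L) : degT k -> Mor L :=
  fun n => pre (kcomp l (c n)) n.

Definition infpath_of_pf (c : degT k -> Mor L) : degT k -> degT k -> Mor L :=
  fun m n => suf (c n) m.

Lemma prefix_family_infpath (x : degT k -> degT k -> Mor L) :
  is_infpath x -> prefix_family (x (dzero k)).
Proof.
move=> [x_rs x_id x_comp x_deg]; split=> [n|n m hnm]; first by rewrite x_deg ?subd0 ?dle0d.
rewrite -(x_comp _ _ _ (dle0d n) hnm).
have := @pre_comp _ _ (x (dzero k) n) (x n m); rewrite x_deg ?dle0d // subd0; apply.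
by rewrite (proj2 (x_rs _ _ (dle0d n))) (proj1 (x_rs _ _ hnm)) x_id rg_idm.
Qed.

Section OnePath.
Variable c : degT k -> Mor L.
Hypothesis pf_c : prefix_family c.

Lemma pf_deg n : deg (c n) = n. Proof. by case: pf_c. Qed.
Lemma pf_pre n m : dle n m -> pre (c m) n = c n. Proof. by case: pf_c => _; apply. Qed.

Lemma pf_rg n : rg (c n) = pf_range c.
Proof. by rewrite /pf_range -(pf_pre (dle0d n)) rg_pre // pf_deg dle0d. Qed.

Lemma pf0 : c (dzero k) = idm (pf_range c).
Proof. exact/deg0_idm/pf_deg. Qed.

Lemma pf_split n m : dle n m ->
  sr (c n) = rg (suf (c m) n) /\ c m = kcomp (c n) (suf (c m) n).
Proof.
move=> hnm; have hle : dle n (deg (c m)) by rewrite pf_deg.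
by rewrite -(pf_pre hnm) sr_pre // pre_suf.
Qed.

Lemma prefix_family_shift m : prefix_family (pf_shift m c).
Proof.
split=> [n|n q hnq]; rewrite /pf_shift; first by rewrite deg_suf pf_deg ?addKd ?dle_addr.
have [hs he] := pf_split (dle_addr m q).
have hn : dle n (deg (suf (c (dadd m q)) m)) by rewrite deg_suf pf_deg ?addKd ?dle_addr.
have e : c (dadd m n) = kcomp (c m) (pre (suf (c (dadd m q)) m) n).
  by have := pre_comp_add hs hn; rewrite pf_deg -he pf_pre // dle_add2l.
by have := @suf_comp _ _ (c m) (pre (suf (c (dadd m q)) m) n);
  rewrite pf_deg -e rg_pre // => /(_ hs) ->.
Qed.

Lemma pf_range_shift m : pf_range (pf_shift m c) = sr (c m).
Proof.
by rewrite /pf_range /pf_shift addd0 -sr_pre ?pf_pre ?dlenn // pf_deg dlenn.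
Qed.

Lemma prefix_family_cons l : sr l = pf_range c -> prefix_family (pf_cons l c).
Proof.
move=> hl; have hr n : sr l = rg (c n) by rewrite pf_rg.
have hle n : dle n (deg (kcomp l (c n))) by rewrite deg_comp // pf_deg dle_addl.
split=> [n|n q hnq]; rewrite /pf_cons; first by rewrite deg_pre.
have [hs he] := pf_split hnq.
by rewrite pre_pre // he comp_assoc // pre_comp_le ?sr_comp.
Qed.

Lemma pf_range_cons l : sr l = pf_range c -> pf_range (pf_cons l c) = rg l.
Proof. by move=> hl; rewrite /pf_range /pf_cons pre0 rg_idm rg_comp // pf_rg. Qed.

Lemma pf_cons_add l n : sr l = pf_range c -> pf_cons l c (dadd (deg l) n) = kcomp l (c n).
Proof.
move=> hl; rewrite /pf_cons pre_comp_add ?pf_pre ?dle_addl ?pf_rg //.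
by rewrite pf_deg dle_addl.
Qed.

Lemma pf_cons_deg l : sr l = pf_range c -> pf_cons l c (deg l) = l.
Proof. by move=> hl; rewrite -[deg l]addd0 pf_cons_add // pf0 -hl comp_idr. Qed.

Lemma pf_shift_cons l : sr l = pf_range c -> pf_shift (deg l) (pf_cons l c) = c.
Proof. by move=> hl; apply: funext => n; rewrite /pf_shift pf_cons_add // suf_comp // pf_rg. Qed.

Lemma pf_cons_shift m : pf_cons (c m) (pf_shift m c) = c.
Proof.
apply: funext => n; have [_ he] := pf_split (dle_addr m n).
by rewrite /pf_cons /pf_shift -he pf_pre // dle_addl.
Qed.

Lemma pf_shift_shift m n : pf_shift n (pf_shift m c) = pf_shift (dadd m n) c.
Proof.
by apply: funext => q; rewrite /pf_shift suf_suf ?adddA // pf_deg dle_addr.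
Qed.

Lemma pf_cons_cons l l' : sr l' = pf_range c -> sr l = rg l' ->
  pf_cons l (pf_cons l' c) = pf_cons (kcomp l l') c.
Proof.
move=> hl' hl; apply: funext => n; have hr : sr l' = rg (c n) by rewrite pf_rg.
set x := kcomp l' (c n).
have hn : dle n (deg x) by rewrite deg_comp // pf_deg dle_addl.
have hrp : rg (pre x n) = rg l' by rewrite rg_pre // rg_comp.
have ex : kcomp (kcomp l l') (c n) = kcomp (kcomp l (pre x n)) (suf x n).
  by rewrite -!comp_assoc ?hrp ?sr_pre ?pre_suf.
rewrite /pf_cons ex [in RHS]pre_comp_le ?sr_comp ?hrp ?sr_pre //.
by rewrite deg_comp ?hrp // deg_pre // dle_addl.
Qed.

Lemma infpath_of_pfP : is_infpath (infpath_of_pf c).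
Proof.
have rg_suf_c n m : dle n m -> rg (suf (c m) n) = sr (c n).
  by move=> hnm; rewrite (proj1 (pf_split hnm)).
rewrite /infpath_of_pf; split.
- by move=> m n hmn; rewrite !rg_suf_c ?dlenn // sr_suf ?pf_deg.
- by move=> m; apply: deg0_idm; rewrite deg_suf pf_deg ?dlenn // subdd.
- move=> m n q hmn hnq; have [_ e2] := pf_split hnq; have [_ e1] := pf_split hmn.
  have e : c q = kcomp (c m) (kcomp (suf (c n) m) (suf (c q) n)).
    by rewrite comp_assoc ?sr_suf ?pf_deg ?rg_suf_c // -e1.
  have := @suf_comp _ _ (c m) (kcomp (suf (c n) m) (suf (c q) n)).
  by rewrite pf_deg -e rg_comp ?sr_suf ?pf_deg ?rg_suf_c // => /(_ erefl) ->.
- by move=> m n hmn; rewrite deg_suf pf_deg.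
Qed.

Lemma infpath_of_pf0 n : infpath_of_pf c (dzero k) n = c n.
Proof. exact: suf0. Qed.

End OnePath.

End PrefixFamilies.

Section PathExtension.
Variables (k : nat) (L : kgraph k).
Hypothesis HL : row_finite_no_sources L.
Implicit Types (mu : Mor L) (n : degT k).

Definition dconst j : degT k := [ffun _ => j].

Lemma path_exists (w : Obj L) n : exists l : Mor L, (rg l == w) && (deg l == n).
Proof. by have [[|l e] [_ // _ /(_ l)]] := HL w n; rewrite mem_head; exists l. Qed.

Definition step (w : Obj L) : Mor L := xchoose (path_exists w (dconst 1)).

Lemma stepP (w : Obj L) : rg (step w) = w /\ deg (step w) = dconst 1.
Proof. by have /andP[/eqP ? /eqP] := xchooseP (path_exists w (dconst 1)). Qed.

Fixpoint chain mu j : Mor L :=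
  if j is j'.+1 then kcomp (chain mu j') (step (sr (chain mu j'))) else mu.

Lemma deg_chain mu j : deg (chain mu j) = dadd (deg mu) (dconst j).
Proof.
elim: j => [|j IH] /=; first by apply: degP => i; rewrite !ffunE addn0.
have [h1 h2] := stepP (sr (chain mu j)).
by rewrite deg_comp // IH h2; apply: degP => i; rewrite !ffunE; lia.
Qed.

Definition dsum n : nat := \sum_(i < k) n i.

Lemma dle_dsum n j : (dsum n <= j)%N -> dle n (dconst j).
Proof.
move=> hj; apply/dleP => i; rewrite ffunE; apply: leq_trans hj.
by rewrite /dsum (bigD1 i) // leq_addr.
Qed.

Lemma dle_chain mu n j : (dsum n <= j)%N -> dle n (deg (chain mu j)).
Proof. by move/dle_dsum => h; rewrite deg_chain; apply: (dle_trans h (dle_addl _ _)). Qed.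

Lemma pre_chain mu J j n : (J <= j)%N -> dle n (deg (chain mu J)) ->
  pre (chain mu j) n = pre (chain mu J) n.
Proof.
move=> hJ hn; elim: j hJ => [|j IH]; first by rewrite leqn0 => /eqP ->.
rewrite leq_eqVlt ltnS => /orP[/eqP -> //|hJ].
have [h1 _] := stepP (sr (chain mu j)).
rewrite /= pre_comp_le ?IH //; apply: (dle_trans hn).
by rewrite !deg_chain; apply/dleP => i; rewrite !ffunE leq_add2l.
Qed.

Definition pf_extend mu : degT k -> Mor L := fun n => pre (chain mu (dsum n)) n.

Lemma prefix_family_extend mu : prefix_family (pf_extend mu).
Proof.
split=> [n|n m hnm]; rewrite /pf_extend; first by rewrite deg_pre // dle_chain.
have hsum : (dsum n <= dsum m)%N by apply: leq_sum => i _; move/dleP: hnm; apply.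
by rewrite pre_pre ?dle_chain // (pre_chain hsum) ?dle_chain.
Qed.

Lemma pf_extend_deg mu : pf_extend mu (deg mu) = mu.
Proof. by rewrite /pf_extend (@pre_chain mu 0) //= ?pre_deg ?dlenn. Qed.

End PathExtension.

Section ConcatInfpaths.
Variables (k : nat) (L : kgraph k).
Implicit Types (a b mu : Mor L) (m : degT k).

Definition concat_infpath_eq a b : Prop :=
  forall g : degT k -> degT k -> Mor L, is_infpath g ->
      infpath_range g = sr a ->
      forall y z, is_concat a g y -> is_concat b g z -> infpath_eq y z.

Lemma concat_infpath_eq_sym a b : sr a = sr b ->
  concat_infpath_eq a b -> concat_infpath_eq b a.
Proof.
by move=> hab h g hg hr y z hy hz q r hqr; symmetry; apply: (h g hg) => //; rewrite hab.
Qed.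

Lemma is_concat_pf_cons a (c : degT k -> Mor L) : prefix_family c -> sr a = pf_range c ->
  is_concat a (infpath_of_pf c) (infpath_of_pf (pf_cons a c)).
Proof.
move=> pf_c ha; split; first exact: infpath_of_pfP (prefix_family_cons pf_c ha).
by move=> n hn; rewrite !infpath_of_pf0 -{1}(subdKC hn) pf_cons_add.
Qed.

Lemma infpath_eq_of_prefixes (y z : degT k -> degT k -> Mor L) : is_infpath y -> is_infpath z ->
  (forall n, y (dzero k) n = z (dzero k) n) -> infpath_eq y z.
Proof.
move=> [y_rs _ y_comp _] [z_rs _ z_comp _] h0 q r hqr.
have e : kcomp (y (dzero k) q) (y q r) = kcomp (z (dzero k) q) (z q r).
  by rewrite y_comp ?z_comp ?dle0d ?h0.
have sy : sr (y (dzero k) q) = rg (y q r).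
  by rewrite (proj2 (y_rs _ _ (dle0d q))) (proj1 (y_rs _ _ hqr)).
have sz : sr (z (dzero k) q) = rg (z q r).
  by rewrite (proj2 (z_rs _ _ (dle0d q))) (proj1 (z_rs _ _ hqr)).
by have [] := factor_uniq sy sz (congr1 deg (h0 q)) e.
Qed.

Hypothesis HL : row_finite_no_sources L.

(* Extend [mu] to an infinite path [x]; then [a x = b x] compares prefixes of [a mu] and [b mu]. *)
Lemma pre_comp_of_concat_eq a b mu m : sr a = sr b ->
  concat_infpath_eq a b -> rg mu = sr a ->
  dle m (deg mu) -> dle (dadd (deg b) m) (deg (kcomp a mu)) ->
  pre (kcomp a mu) (dadd (deg b) m) = kcomp b (pre mu m).
Proof.
move=> hab hP3 hmu hm hle; set c := pf_extend HL mu.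
have pf_c : prefix_family c := prefix_family_extend HL mu.
have c_mu : c (deg mu) = mu := pf_extend_deg HL mu.
have hrange : pf_range c = sr a by rewrite -(pf_rg pf_c (deg mu)) c_mu.
have hb : sr b = pf_range c by rewrite hrange hab.
have hx : infpath_range (infpath_of_pf c) = sr a by rewrite /infpath_range infpath_of_pf0.
have /(_ (dzero k) (dadd (deg b) m) (dle0d _)) := hP3 _ (infpath_of_pfP pf_c) hx _ _
  (is_concat_pf_cons pf_c (esym hrange)) (is_concat_pf_cons pf_c hb).
rewrite !infpath_of_pf0 pf_cons_add // -(pf_pre pf_c hm) c_mu => <-.
have [pf_ac pre_ac] := prefix_family_cons pf_c (esym hrange).
by rewrite -(pre_ac _ (dadd (deg a) (deg mu))) ?pf_cons_add ?c_mu // -deg_comp.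
Qed.

End ConcatInfpaths.

Local Open Scope ring_scope.
Local Notation "x ** y" := (nua_mul x y) (at level 40, left associativity).

Section NonUnitalAlgebra.
Variables (R : comNzRingType) (A : nualg R).
Implicit Types x : A.

Lemma nua_mulr0 x : x ** 0 = 0.
Proof. by have := nua_mulZr 0 x 0; rewrite !scale0r. Qed.

Lemma nua_mul0r x : 0 ** x = 0.
Proof. by have := nua_mulZl 0 0 x; rewrite !scale0r. Qed.

Lemma nua_mul_sumr (I : Type) x (e : seq I) (F : I -> A) :
  x ** (\sum_(i <- e) F i) = \sum_(i <- e) (x ** F i).
Proof.
by elim: e => [|i e IH]; rewrite ?big_nil ?nua_mulr0 // !big_cons nua_mulDr IH.
Qed.

Lemma nua_mul_suml (I : Type) x (e : seq I) (F : I -> A) :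
  (\sum_(i <- e) F i) ** x = \sum_(i <- e) (F i ** x).
Proof.
by elim: e => [|i e IH]; rewrite ?big_nil ?nua_mul0r // !big_cons nua_mulDl IH.
Qed.

End NonUnitalAlgebra.

Section KPFamily.
Variables (k : nat) (L : kgraph k) (R : comNzRingType) (A : nualg R).
Variables (p : Obj L -> A) (s ss : Mor L -> A).
Hypothesis KP : is_KP_family p s ss.
Implicit Types (a b l m mu : Mor L).

Lemma KP_deg0 l : deg l = dzero k -> [/\ s l = p (rg l), ss l = p (rg l) & sr l = rg l].
Proof.
move=> hl; have [conv _ _ _ _] := KP; have e := deg0_idm hl.
by have [] := conv (rg l); rewrite -e; split=> //; rewrite {1}e sr_idm.
Qed.

Lemma KP_pp (v w : Obj L) : p v ** p w = if v == w then p v else 0.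
Proof. by case: KP. Qed.

Lemma KP_p_idem (v : Obj L) : p v ** p v = p v.
Proof. by rewrite KP_pp eqxx. Qed.

Lemma KP_p_absorb l :
  [/\ p (rg l) ** s l = s l, s l ** p (sr l) = s l,
      p (sr l) ** ss l = ss l & ss l ** p (rg l) = ss l].
Proof.
have [_ _ [_ absorb] _ _] := KP.
have [/eqP hl|] := boolP (deg l == dzero k); last exact: absorb.
by have [-> -> ->] := KP_deg0 hl; rewrite KP_p_idem.
Qed.

Lemma KP_s_comp l m : sr l = rg m ->
  s (kcomp l m) = s l ** s m /\ ss (kcomp l m) = ss m ** ss l.
Proof.
move=> hlm; have [_ _ [mul _] _ _] := KP.
have [/eqP hl|hl] := boolP (deg l == dzero k).
  have [-> -> hsr] := KP_deg0 hl; have [q1 _ _ q4] := KP_p_absorb m.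
  have el : l = idm (rg m) by rewrite -hlm hsr; apply: deg0_idm.
  by rewrite el rg_idm comp_idl q1 q4.
have [/eqP hm|hm] := boolP (deg m == dzero k).
  have [-> -> _] := KP_deg0 hm; have [_ q2 q3 _] := KP_p_absorb l.
  have em : m = idm (sr l) by rewrite hlm; apply: deg0_idm.
  by rewrite em rg_idm comp_idr q2 q3.
by have [-> ->] := mul l m hl hm (esym hlm).
Qed.

Lemma KP_ss_s l m : deg l = deg m -> ss l ** s m = if l == m then p (sr l) else 0.
Proof.
move=> hlm; have [_ _ _ ss_s _] := KP.
have [/eqP hl|hl] := boolP (deg l == dzero k); last exact: ss_s.
have hm : deg m = dzero k by rewrite -hlm.
have [_ -> ->] := KP_deg0 hl; have [-> _ _] := KP_deg0 hm.
rewrite KP_pp; congr (if _ then _ else _).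
by apply/eqP/eqP => [e|-> //]; rewrite (deg0_idm hl) (deg0_idm hm) e.
Qed.

Lemma KP_s_ss_s l : s l ** ss l ** s l = s l.
Proof. by rewrite -nua_mulA KP_ss_s // eqxx; case: (KP_p_absorb l). Qed.

Lemma KP_proj_s mu l : dle (deg mu) (deg l) ->
  s mu ** ss mu ** s l = if pre l (deg mu) == mu then s l else 0.
Proof.
move=> hle; have [es _] := KP_s_comp (sr_pre hle); rewrite pre_suf // in es.
rewrite {1}es -nua_mulA (nua_mulA (ss mu)) KP_ss_s ?deg_pre // eq_sym.
case: eqP => [e|_]; last by rewrite !nua_mul0r nua_mulr0.
by have [_ q2 _ _] := KP_p_absorb mu; rewrite nua_mulA q2 es e.
Qed.

Lemma KP_ss_proj mu l : dle (deg mu) (deg l) ->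
  ss l ** (s mu ** ss mu) = if pre l (deg mu) == mu then ss l else 0.
Proof.
move=> hle; have [_ es] := KP_s_comp (sr_pre hle); rewrite pre_suf // in es.
rewrite {1}es nua_mulA -(nua_mulA (ss _)) KP_ss_s ?deg_pre //.
case: eqP => [e|_]; last by rewrite nua_mulr0 !nua_mul0r.
by have [_ _ _ q4] := KP_p_absorb (suf l (deg mu)); rewrite sr_pre // q4 es e.
Qed.

Lemma KP_normal a b : sr a = sr b -> (s a ** ss b) ** (s b ** ss a) = s a ** ss a.
Proof.
move=> hab; rewrite nua_mulA -(nua_mulA (s a)) KP_ss_s // eqxx -hab.
by case: (KP_p_absorb a) => _ ->.
Qed.

Hypothesis HL : row_finite_no_sources L.

(* Insert (KP4) for [p_(sr a)] between [s_a] and [s_b^*]. *)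
Lemma KP_expand a b (n : degT k) : sr a = sr b -> n != dzero k ->
  exists e : seq (Mor L), (forall l, (l \in e) = (rg l == sr a) && (deg l == n)) /\
    s a ** ss b = \sum_(l <- e) s (kcomp a l) ** ss (kcomp b l).
Proof.
move=> hab hn; have [_ _ _ _ KP4] := KP; have [e [uniq_e _ mem_e]] := HL (sr a) n.
exists e; split => //; have [_ q2 _ _] := KP_p_absorb a.
rewrite -{1}q2 (KP4 _ _ hn e uniq_e mem_e) nua_mul_sumr nua_mul_suml.
apply: eq_big_seq => l; rewrite mem_e => /andP[/eqP hl _].
have [-> _] := KP_s_comp (esym hl).
have [_ ->] := KP_s_comp (l := b) (m := l) (etrans (esym hab) (esym hl)).
by rewrite !nua_mulA.
Qed.


Definition proj_ext_eq a b : Prop :=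
  forall g : Mor L, rg g = sr a ->
    s (kcomp a g) ** ss (kcomp a g) = s (kcomp b g) ** ss (kcomp b g).

Definition normal_diag_central a b : Prop :=
  let x := s a ** ss b in
  let xstar := s b ** ss a in
  x ** xstar = xstar ** x /\ (forall y, in_diag s ss y -> x ** y = y ** x).

Lemma KP_normal_iff a b : sr a = sr b ->
  (s a ** ss b) ** (s b ** ss a) = (s b ** ss a) ** (s a ** ss b) <->
  s a ** ss a = s b ** ss b.
Proof. by move=> hab; rewrite KP_normal // KP_normal. Qed.

Lemma proj_ext_eq_proj a b : sr a = sr b -> proj_ext_eq a b -> s a ** ss a = s b ** ss b.
Proof. by move=> hab /(_ _ (rg_idm _)); rewrite comp_idr hab comp_idr. Qed.

(* Write [s_al = s_be s_be^* s_al]; then [s_mu s_mu^*] is absorbed on both sides. *)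
Lemma KP_proj_comm al be mu : s al ** ss al = s be ** ss be ->
  dle (deg mu) (deg al) -> dle (deg mu) (deg be) ->
  (s mu ** ss mu) ** (s al ** ss be) = (s al ** ss be) ** (s mu ** ss mu).
Proof.
move=> he h1 h2; have ea : s al = s be ** ss be ** s al by rewrite -he KP_s_ss_s.
rewrite -(nua_mulA (s al) (ss be)) KP_ss_proj // ea !nua_mulA KP_proj_s //.
by case: eqP => _; rewrite -?ea // !nua_mul0r nua_mulr0.
Qed.

Lemma diag_central_of_proj_ext a b : sr a = sr b -> proj_ext_eq a b ->
  forall y, in_diag s ss y -> (s a ** ss b) ** y = y ** (s a ** ss b).
Proof.
move=> hab hP1 y; have hP : s a ** ss a = s b ** ss b := proj_ext_eq_proj hab hP1.
elim=> [mu| |y1 y2 _ IH1 _ IH2|c y1 _ IH|y1 y2 _ IH1 _ IH2].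
- symmetry; have [/eqP hd|hd] := boolP (deg mu == dzero k).
    by apply: KP_proj_comm; rewrite // hd dle0d.
  have [e [mem_e ->]] := KP_expand hab hd.
  rewrite nua_mul_sumr nua_mul_suml; apply: eq_big_seq => l.
  rewrite mem_e => /andP[/eqP hl /eqP dl].
  by apply: KP_proj_comm; rewrite ?hP1 // deg_comp -?hab ?hl // dl dle_addl.
- by rewrite nua_mulr0 nua_mul0r.
- by rewrite nua_mulDr nua_mulDl IH1 IH2.
- by rewrite nua_mulZr nua_mulZl IH.
- by rewrite nua_mulA IH1 -nua_mulA IH2 nua_mulA.
Qed.

(* With [x := s_a s_b^*]: [s_(a g) s_(a g)^* = (x y) (y x^* )], and [x y = y x] turns this
   into [y x x^* = y s_b s_b^* = y]. *)
Lemma proj_ext_of_normal_central a b g : sr a = sr b -> rg g = sr a ->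
  s a ** ss a = s b ** ss b ->
  let y := s (kcomp b g) ** ss (kcomp b g) in
  (s a ** ss b) ** y = y ** (s a ** ss b) ->
  s (kcomp a g) ** ss (kcomp a g) = y.
Proof.
move=> hab hg hP y hxy.
have hgb : sr b = rg g by rewrite -hab.
have [sa ssa] := KP_s_comp (esym hg); have [sb ssb] := KP_s_comp hgb.
set x := s a ** ss b; set xstar := s b ** ss a.
have xy : x ** y = s (kcomp a g) ** ss (kcomp b g).
  rewrite /x /y sb ssb sa !nua_mulA -(nua_mulA (s a)) KP_ss_s // eqxx -hab.
  by case: (KP_p_absorb a) => _ ->.
have yxstar : y ** xstar = s (kcomp b g) ** ss (kcomp a g).
  rewrite /xstar /y ssb ssa !nua_mulA -(nua_mulA _ (ss b)) KP_ss_s // eqxx hgb.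
  by rewrite -(nua_mulA _ (ss g)); case: (KP_p_absorb g) => _ _ _ ->.
have yy : y ** y = y by rewrite /y nua_mulA KP_s_ss_s.
have hsg : sr (kcomp a g) = sr (kcomp b g) by rewrite !sr_comp // -hgb.
have Pag : s (kcomp a g) ** ss (kcomp a g) = (x ** y) ** (y ** xstar).
  rewrite xy yxstar nua_mulA -(nua_mulA _ (ss (kcomp b g))) KP_ss_s // eqxx -hsg.
  by case: (KP_p_absorb (kcomp a g)) => _ ->.
rewrite Pag -nua_mulA (nua_mulA y) yy nua_mulA hxy -nua_mulA /x /xstar KP_normal // hP.
rewrite /y ssb -!nua_mulA (nua_mulA (ss b)) KP_ss_s // eqxx.
by case: (KP_p_absorb b) => _ _ ->.
Qed.

Lemma proj_ext_eq_iff_normal_diag_central a b : sr a = sr b ->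
  proj_ext_eq a b <-> normal_diag_central a b.
Proof.
move=> hab; split=> [hP1|[hnorm hcent] g hg].
  split; first by apply/KP_normal_iff/proj_ext_eq_proj.
  exact: diag_central_of_proj_ext.
apply: proj_ext_of_normal_central => //; first exact/KP_normal_iff.
exact/hcent/diag_gen.
Qed.

Lemma KP_proj_absorb a b g : (0 < k)%N -> sr a = sr b -> concat_infpath_eq a b -> rg g = sr a ->
  let Pa := s (kcomp a g) ** ss (kcomp a g) in
  let Pb := s (kcomp b g) ** ss (kcomp b g) in
  Pb ** Pa = Pa /\ Pa ** Pb = Pa.
Proof.
move=> k_gt0 hab hP3 hg Pa Pb; set n := dadd (deg b) (dconst k 1).
have hn : n != dzero k.
  by apply/eqP => /(congr1 (fun m : degT k => m (Ordinal k_gt0))); rewrite !ffunE addn1.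
have hga : sr a = rg g by [].
have hgb : sr b = rg g by rewrite -hab.
have hsr : sr (kcomp a g) = sr g by rewrite sr_comp.
have [e [mem_e Pa_sum]] := KP_expand (erefl (sr (kcomp a g))) hn.
have pre_agl l : l \in e -> pre (kcomp (kcomp a g) l) (deg (kcomp b g)) = kcomp b g.
  rewrite mem_e hsr => /andP[/eqP hl /eqP dl].
  have hgl : dle (deg g) (deg (kcomp g l)) by rewrite deg_comp ?dle_addr.
  rewrite -comp_assoc // deg_comp // pre_comp_of_concat_eq ?rg_comp ?pre_comp //.
  rewrite deg_comp ?rg_comp // deg_comp // dl.
  by apply/dleP => i; rewrite !ffunE; lia.
have dle_agl l : l \in e -> dle (deg (kcomp b g)) (deg (kcomp (kcomp a g) l)).
  rewrite mem_e hsr => /andP[/eqP hl /eqP dl].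
  rewrite deg_comp // deg_comp ?hsr // deg_comp // dl.
  by apply/dleP => i; rewrite !ffunE; lia.
split; rewrite /Pa Pa_sum.
- rewrite nua_mul_sumr; apply: eq_big_seq => l hl.
  by rewrite nua_mulA KP_proj_s ?dle_agl // pre_agl // eqxx.
- rewrite nua_mul_suml; apply: eq_big_seq => l hl.
  by rewrite -nua_mulA KP_ss_proj ?dle_agl // pre_agl // eqxx.
Qed.

Lemma proj_ext_of_concat_eq a b : sr a = sr b -> concat_infpath_eq a b -> proj_ext_eq a b.
Proof.
move=> hab hP3 g hg; have [k0|k_gt0] := posnP k.
  have deg0 l : deg l = dzero k by move: (deg l); rewrite k0 => d; apply: degT0.
  have ea := deg0_idm (deg0 a); have eb := deg0_idm (deg0 b).
  by move: hab; rewrite ea eb !sr_idm => ->.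
have [_ ab] := KP_proj_absorb k_gt0 hab hP3 hg.
have [ab' _] := KP_proj_absorb k_gt0 (esym hab) (concat_infpath_eq_sym hab hP3) (etrans hg hab).
by rewrite -ab ab'.
Qed.

End KPFamily.

Section InfinitePathOperators.
Variables (k : nat) (L : kgraph k) (R : comNzRingType).
Implicit Types (l : Mor L) (m : degT k).

Definition ipath := {c : degT k -> Mor L | prefix_family c}.

Definition ipath_range (x : ipath) : Obj L := pf_range (sval x).

Lemma ipathP (x y : ipath) : sval x = sval y -> x = y.
Proof. by case: x y => [x hx] [y hy] /= e; subst y; congr exist; apply: Prop_irrelevance. Qed.

Definition ipath_shift m (x : ipath) : ipath := exist _ _ (prefix_family_shift (svalP x) m).

(* Junk value [x] when [l x] is not composable. *)
Definition ipath_cons l (x : ipath) : ipath :=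
  match @eqP _ (sr l) (ipath_range x) with
  | ReflectT h => exist _ (pf_cons l (sval x)) (prefix_family_cons (svalP x) h)
  | ReflectF _ => x
  end.

Lemma ipath_range_shift m x : ipath_range (ipath_shift m x) = sr (sval x m).
Proof. exact/pf_range_shift/svalP. Qed.

Lemma ipath_cons_val l x : sr l = ipath_range x -> sval (ipath_cons l x) = pf_cons l (sval x).
Proof. by rewrite /ipath_cons; case: eqP. Qed.

Lemma ipath_range_cons l x : sr l = ipath_range x -> ipath_range (ipath_cons l x) = rg l.
Proof. by move=> h; rewrite /ipath_range ipath_cons_val // pf_range_cons //; apply: svalP. Qed.

Lemma ipath_cons_shift l m x : sval x m = l -> ipath_cons l (ipath_shift m x) = x.
Proof.
move=> e; have h : sr l = ipath_range (ipath_shift m x) by rewrite ipath_range_shift e.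
by apply: ipathP; rewrite ipath_cons_val //= -e pf_cons_shift //; apply: svalP.
Qed.

Lemma ipath_shift_cons l x : sr l = ipath_range x -> ipath_shift (deg l) (ipath_cons l x) = x.
Proof. by move=> h; apply: ipathP; rewrite /= ipath_cons_val // pf_shift_cons //; apply: svalP. Qed.

Lemma ipath_cons_cons l l' x : sr l' = ipath_range x -> sr l = rg l' ->
  ipath_cons l (ipath_cons l' x) = ipath_cons (kcomp l l') x.
Proof.
move=> hl' hl; have h : sr l = ipath_range (ipath_cons l' x) by rewrite ipath_range_cons.
have h' : sr (kcomp l l') = ipath_range x by rewrite sr_comp.
by apply: ipathP; rewrite !ipath_cons_val // pf_cons_cons //; apply: svalP.
Qed.

Record linop := LinOp {
  lapp : (ipath -> R) -> ipath -> R;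
  lappD : forall f g x, lapp (fun z => f z + g z) x = lapp f x + lapp g x;
  lappZ : forall r f x, lapp (fun z => r * f z) x = r * lapp f x
}.

Lemma linopP (T U : linop) : (forall f x, lapp T f x = lapp U f x) -> T = U.
Proof.
case: T U => [T TD TZ] [U UD UZ] /= h.
have e : T = U by apply: funext => f; apply: funext => x.
by subst U; congr LinOp; apply: Prop_irrelevance.
Qed.

Lemma lappD_fun (T : linop) f g : lapp T (fun z => f z + g z) = fun x => lapp T f x + lapp T g x.
Proof. by apply: funext => x; apply: lappD. Qed.

Lemma lappZ_fun (T : linop) (r : R) f : lapp T (fun z => r * f z) = fun x => r * lapp T f x.
Proof. by apply: funext => x; apply: lappZ. Qed.

Definition linop0 : linop :=
  @LinOp (fun f x => 0) (fun _ _ _ => esym (addr0 _)) (fun _ _ _ => esym (mulr0 _)).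

Definition linop_add (T U : linop) : linop.
Proof.
refine (@LinOp (fun f x => lapp T f x + lapp U f x) _ _) => [f g x|r f x].
  by rewrite !lappD addrACA.
by rewrite !lappZ mulrDr.
Defined.

Definition linop_opp (T : linop) : linop.
Proof.
refine (@LinOp (fun f x => - lapp T f x) _ _) => [f g x|r f x]; first by rewrite lappD opprD.
by rewrite lappZ mulrN.
Defined.

Definition linop_scale (r : R) (T : linop) : linop.
Proof.
refine (@LinOp (fun f x => r * lapp T f x) _ _) => [f g x|r' f x]; first by rewrite lappD mulrDr.
by rewrite lappZ mulrCA.
Defined.

Definition linop_mul (T U : linop) : linop.
Proof.
refine (@LinOp (fun f x => lapp T (lapp U f) x) _ _) => [f g x|r f x].
  by rewrite lappD_fun lappD.
by rewrite lappZ_fun lappZ.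
Defined.

Lemma linop_addA : associative linop_add.
Proof. by move=> T U V; apply: linopP => f x /=; rewrite addrA. Qed.
Lemma linop_addC : commutative linop_add.
Proof. by move=> T U; apply: linopP => f x /=; rewrite addrC. Qed.
Lemma linop_add0 : left_id linop0 linop_add.
Proof. by move=> T; apply: linopP => f x /=; rewrite add0r. Qed.
Lemma linop_addN : left_inverse linop0 linop_opp linop_add.
Proof. by move=> T; apply: linopP => f x /=; rewrite addNr. Qed.

Lemma linop_scaleA a b T : linop_scale a (linop_scale b T) = linop_scale (a * b) T.
Proof. by apply: linopP => f x /=; rewrite mulrA. Qed.
Lemma linop_scale1 : left_id 1 linop_scale.
Proof. by move=> T; apply: linopP => f x /=; rewrite mul1r. Qed.
Lemma linop_scaleDr : right_distributive linop_scale linop_add.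
Proof. by move=> a T U; apply: linopP => f x /=; rewrite mulrDr. Qed.
Lemma linop_scaleDl T : {morph linop_scale^~ T : a b / a + b >-> linop_add a b}.
Proof. by move=> a b; apply: linopP => f x /=; rewrite mulrDl. Qed.

End InfinitePathOperators.

HB.instance Definition _ k (L : kgraph k) (R : comNzRingType) := gen_eqMixin (linop L R).
HB.instance Definition _ k (L : kgraph k) (R : comNzRingType) := gen_choiceMixin (linop L R).
HB.instance Definition _ k (L : kgraph k) (R : comNzRingType) :=
  GRing.isZmodule.Build (linop L R) (@linop_addA k L R) (@linop_addC k L R)
    (@linop_add0 k L R) (@linop_addN k L R).
HB.instance Definition _ k (L : kgraph k) (R : comNzRingType) :=
  GRing.Zmodule_isLmodule.Build R (linop L R) (@linop_scaleA k L R) (@linop_scale1 k L R)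
    (@linop_scaleDr k L R) (@linop_scaleDl k L R).

Section BoundaryPathFamily.
Variables (k : nat) (L : kgraph k) (R : comNzRingType).
Implicit Types (l m : Mor L) (v : Obj L) (f : ipath L -> R) (x : ipath L).

Lemma linop_mulA : associative (@linop_mul k L R).
Proof. by move=> T U V; apply: linopP. Qed.
Lemma linop_mulDl : left_distributive (@linop_mul k L R) +%R.
Proof. by move=> T U V; apply: linopP. Qed.
Lemma linop_mulDr : right_distributive (@linop_mul k L R) +%R.
Proof. by move=> T U V; apply: linopP => f x /=; rewrite lappD_fun. Qed.
Lemma linop_mulZl (r : R) (T U : linop L R) : linop_mul (r *: T) U = r *: linop_mul T U.
Proof. by apply: linopP. Qed.
Lemma linop_mulZr (r : R) (T U : linop L R) : linop_mul T (r *: U) = r *: linop_mul T U.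
Proof. by apply: linopP => f x; apply: (lappZ T). Qed.

Definition path_alg : nualg R :=
  @NUAlg R (linop L R) (@linop_mul k L R)
    linop_mulA linop_mulDl linop_mulDr linop_mulZl linop_mulZr.

Lemma lapp_mul (T U : path_alg) f x : lapp (T ** U) f x = lapp T (lapp U f) x.
Proof. by []. Qed.

Lemma lapp_sum (I : Type) (e : seq I) (F : I -> path_alg) f x :
  lapp (\sum_(i <- e) F i) f x = \sum_(i <- e) lapp (F i) f x.
Proof. by elim: e => [|i e IH]; rewrite ?big_nil // !big_cons -IH. Qed.

Definition lin_p v : linop L R.
Proof.
refine (@LinOp _ _ _ (fun f x => if ipath_range x == v then f x else 0) _ _) => [f g x|r f x];
  by case: eqP; rewrite ?addr0 ?mulr0.
Defined.

Definition lin_s l : linop L R.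
Proof.
refine (@LinOp _ _ _ (fun f x => if sval x (deg l) == l then f (ipath_shift (deg l) x) else 0) _ _)
  => [f g x|r f x]; by case: eqP; rewrite ?addr0 ?mulr0.
Defined.

Definition lin_ss l : linop L R.
Proof.
refine (@LinOp _ _ _ (fun f x => if ipath_range x == sr l then f (ipath_cons l x) else 0) _ _)
  => [f g x|r f x]; by case: eqP; rewrite ?addr0 ?mulr0.
Defined.

Definition path_p v : path_alg := lin_p v.
Definition path_s l : path_alg := if deg l == dzero k then lin_p (rg l) else lin_s l.
Definition path_ss l : path_alg := if deg l == dzero k then lin_p (rg l) else lin_ss l.

Lemma path_proj l f x :
  lapp (path_s l ** path_ss l) f x = if sval x (deg l) == l then f x else 0.
Proof.
have pf_x := svalP x; rewrite /path_s /path_ss lapp_mul.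
case: eqP => [hd|hd] /=.
  rewrite hd (pf0 pf_x) [X in idm _ == X](deg0_idm hd) -/(ipath_range x).
  case: (eqVneq (ipath_range x) (rg l)) => [->|ne]; first by rewrite eqxx.
  by case: eqP => // /(congr1 rg); rewrite !rg_idm => e; rewrite e eqxx in ne.
case: (eqVneq (sval x (deg l)) l) => [e|] //.
by rewrite ipath_range_shift e eqxx ipath_cons_shift.
Qed.

Lemma path_pp v w : path_p v ** path_p w = if v == w then path_p v else 0.
Proof.
apply: linopP => f x; rewrite lapp_mul /=.
have [<-|ne] := eqVneq v w; first by rewrite /path_p /=; case: eqP.
by case: eqP => // ->; rewrite (negbTE ne).
Qed.

Lemma path_s_comp l m : deg l != dzero k -> deg m != dzero k -> rg m = sr l ->
  path_s l ** path_s m = path_s (kcomp l m) /\ path_ss m ** path_ss l = path_ss (kcomp l m).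
Proof.
move=> hl hm hlm; have hlm0 : deg (kcomp l m) != dzero k.
  apply: contra hl; rewrite deg_comp -?hlm // => /eqP /ffunP h; apply/eqP/ffunP => i.
  by move: (h i); rewrite !ffunE => /eqP; rewrite addn_eq0 => /andP[/eqP].
rewrite /path_s /path_ss (negbTE hl) (negbTE hm) (negbTE hlm0).
split; apply: linopP => f x; rewrite lapp_mul /=; have pf_x := svalP x.
- have e1 : sval x (deg l) = pre (sval x (dadd (deg l) (deg m))) (deg l).
    by rewrite (pf_pre pf_x) ?dle_addr.
  rewrite e1 /pf_shift deg_comp -?hlm //.
  have hd : dle (deg l) (deg (sval x (dadd (deg l) (deg m)))) by rewrite (pf_deg pf_x) dle_addr.
  have eshift : ipath_shift (deg m) (ipath_shift (deg l) x) = ipath_shift (dadd (deg l) (deg m)) x.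
    by apply: ipathP; rewrite /= pf_shift_shift.
  have [->|ne] := eqVneq (sval x (dadd (deg l) (deg m))) (kcomp l m).
    by rewrite pre_comp ?suf_comp ?eqxx ?eshift.
  case: eqP => [e|] //; case: eqP => [e'|] //.
  by rewrite -(pre_suf hd) e e' eqxx in ne.
- rewrite sr_comp -?hlm //; case: eqP => [h|] //.
  have hm' : sr m = ipath_range x by rewrite h.
  by rewrite ipath_range_cons // hlm eqxx ipath_cons_cons.
Qed.

Lemma path_absorb l : deg l != dzero k ->
  [/\ path_p (rg l) ** path_s l = path_s l, path_s l ** path_p (sr l) = path_s l,
      path_p (sr l) ** path_ss l = path_ss l & path_ss l ** path_p (rg l) = path_ss l].
Proof.
move=> hl; rewrite /path_s /path_ss (negbTE hl).
split; apply: linopP => f x; rewrite lapp_mul /=; have pf_x := svalP x.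
- case: (eqVneq (sval x (deg l)) l) => [e|_]; last by case: eqP.
  by rewrite -e /ipath_range (pf_rg pf_x) eqxx.
- by case: eqP => [e|] //; rewrite ipath_range_shift e eqxx.
- by case: eqP.
- by case: eqP => [e|] //; rewrite ipath_range_cons ?eqxx.
Qed.

Lemma path_ss_s l m : deg l != dzero k -> deg l = deg m ->
  path_ss l ** path_s m = if l == m then path_p (sr l) else 0.
Proof.
move=> hl hlm; rewrite /path_s /path_ss (negbTE hl) -hlm (negbTE hl).
apply: linopP => f x; rewrite lapp_mul /=.
case: eqP => [e|ne]; last by case: (l == m) => //=; rewrite (introF eqP ne).
rewrite ipath_cons_val // -hlm pf_cons_deg //; last exact: svalP.
by case: (eqVneq l m) => //= _; rewrite /path_p /= e eqxx (ipath_shift_cons (esym e)).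
Qed.

Lemma sum_if_eq_uniq (T : eqType) (e : seq T) (t : T) (r : R) : uniq e ->
  \sum_(l <- e) (if t == l then r else 0) = if t \in e then r else 0.
Proof.
elim: e => [|l e IH] /=; first by rewrite big_nil.
case/andP=> l_e uniq_e; rewrite big_cons IH // in_cons.
by have [->|] := eqVneq t l; rewrite ?(negbTE l_e) ?addr0 ?add0r.
Qed.

Lemma path_KP4 v (n : degT k) : n != dzero k -> forall e : seq (Mor L), uniq e ->
  (forall l, (l \in e) = (rg l == v) && (deg l == n)) ->
  path_p v = \sum_(l <- e) path_s l ** path_ss l.
Proof.
move=> hn e uniq_e mem_e; apply: linopP => f x; rewrite lapp_sum.
have pf_x := svalP x.
rewrite (eq_big_seq (fun l => if sval x n == l then f x else 0)) => [|l]; last first.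
  by rewrite mem_e path_proj => /andP[_ /eqP ->].
by rewrite sum_if_eq_uniq // mem_e (pf_deg pf_x) (pf_rg pf_x) eqxx andbT.
Qed.

Lemma path_KP_family : is_KP_family path_p path_s path_ss.
Proof.
split; [|exact: path_pp| |exact: path_ss_s|exact: path_KP4].
  by move=> v; rewrite /path_s /path_ss deg_idm eqxx rg_idm.
by split; [exact: path_s_comp|exact: path_absorb].
Qed.

Lemma cylinder_of_path_proj_ext (a b g : Mor L) x :
  proj_ext_eq path_s path_ss a b -> rg g = sr a ->
  sval x (deg (kcomp a g)) = kcomp a g -> sval x (deg (kcomp b g)) = kcomp b g.
Proof.
move=> hP1 hg hx; have := path_proj (kcomp a g) (fun _ => 1) x.
rewrite hP1 // path_proj hx eqxx; case: eqP => // _ /eqP.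
by rewrite eq_sym oner_eq0.
Qed.

End BoundaryPathFamily.

Section UniversalProperty.
Variables (k : nat) (L : kgraph k) (R : comNzRingType) (A : nualg R).
Variables (p : Obj L -> A) (s ss : Mor L -> A).
Hypothesis HA : is_KP_algebra p s ss.

Lemma proj_ext_eq_path (a b : Mor L) :
  proj_ext_eq s ss a b -> proj_ext_eq (@path_s k L R) (@path_ss k L R) a b.
Proof.
move=> hP1 g hg; have [_ univ] := HA.
have [[phi [[_ _ phiM] [_ phis phiss]]] _] := univ _ _ _ _ (@path_KP_family k L R).
by rewrite -!phis -!phiss -!phiM hP1.
Qed.

Lemma concat_eq_of_proj_ext (a b : Mor L) : sr a = sr b ->
  proj_ext_eq s ss a b -> concat_infpath_eq a b.
Proof.
move=> hab /proj_ext_eq_path hP1 g hg hgr y z [hy y_cons] [hz z_cons].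
apply: infpath_eq_of_prefixes => // n.
have pf_g := prefix_family_infpath hg; have pf_y := prefix_family_infpath hy.
have pf_z := prefix_family_infpath hz.
have hgn : rg (g (dzero k) n) = sr a by rewrite (pf_rg pf_g).
have ya : y (dzero k) (dadd (deg a) n) = kcomp a (g (dzero k) n).
  by rewrite (y_cons _ (dle_addr (deg a) n)) addKd.
have yb : y (dzero k) (dadd (deg b) n) = kcomp b (g (dzero k) n).
  have := cylinder_of_path_proj_ext (x := exist _ _ pf_y) hP1 hgn.
  by rewrite /= !deg_comp -?hab // (pf_deg pf_g) ya; apply.
have zb : z (dzero k) (dadd (deg b) n) = kcomp b (g (dzero k) n).
  by rewrite (z_cons _ (dle_addr (deg b) n)) addKd.
by rewrite -(pf_pre pf_y (dle_addl (deg b) n)) -(pf_pre pf_z (dle_addl (deg b) n)) yb zb.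
Qed.

End UniversalProperty.

Theorem proposition4p1 (k : nat) (L : kgraph k) (R : comNzRingType) (A : nualg R)
    (p : Obj L -> A) (s ss : Mor L -> A)
    (HL : row_finite_no_sources L) (HA : is_KP_algebra p s ss)
    (a b : Mor L) (hab : sr a = sr b) :
  let P1 := forall g : Mor L, rg g = sr a ->
      nua_mul (s (kcomp a g)) (ss (kcomp a g)) = nua_mul (s (kcomp b g)) (ss (kcomp b g)) in
  let P2 := let x := nua_mul (s a) (ss b) in
            let xstar := nua_mul (s b) (ss a) in
      nua_mul x xstar = nua_mul xstar x /\
      (forall y, in_diag s ss y -> nua_mul x y = nua_mul y x) in
  let P3 := forall g : degT k -> degT k -> Mor L, is_infpath g ->
      infpath_range g = sr a ->
      forall y z, is_concat a g y -> is_concat b g z -> infpath_eq y z in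
  (P1 <-> P2) /\ (P2 <-> P3).
Proof.
move=> P1 P2 P3; have KP : is_KP_family p s ss by case: HA.
have P1_P2 : P1 <-> P2 := proj_ext_eq_iff_normal_diag_central KP HL hab.
have P1_P3 : P1 <-> P3 := conj (concat_eq_of_proj_ext HA hab) (proj_ext_of_concat_eq KP HL hab).
by split=> //; apply: iff_trans (iff_sym P1_P2) P1_P3.
Qed.
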